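(* Let $D$ be an odd prime. For any $\varepsilon>0$ there exist $c,\rho>0$ such that the following holds. Let $n=H+2L$ with $H\le \rho n$, let $\delta$ be a random $2n\times 2n$ boundary operator (as defined in the context) with these parameters, and consider $\ker\delta\subseteq \mathbb{Z}_D^{2n}$. Then the probability that $\ker\delta$ contains a nonzero vector of weight less than $cn$ is $O(D^{(-1/2+\varepsilon)n})$ as $n\to\infty$.
   Context: $\mathbb{Z}_D$ is the field with $D$ elements. Let $\delta_0$ be the $n\times n$ matrix over $\mathbb{Z}_D$ which, in block form with row and column block sizes $H,L,L$ (in this order), has the identity $I_L$ in block position (2,3) and zero blocks elsewhere. A random $2n\times 2n$ boundary operator on $C=C_+\oplus C_-$, $C_\pm=\mathbb{Z}_D^n$, is $\delta=\begin{bmatrix}U_+&0\\0&U_-\end{bmatrix}\begin{bmatrix}0&\delta_0\\ \delta_0&0\end{bmatrix}\begin{bmatrix}U_+^{-1}&0\\0&U_-^{-1}\end{bmatrix}$, where $U_+,U_-$ are independent and uniformly distributed in $\mathrm{GL}(n,\mathbb{Z}_D)$. The weight of a vector is the number of its nonzero coordinates in the standard basis. *)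

From Stdlib Require Import Reals.
From mathcomp Require Import all_boot all_algebra.

Set Implicit Arguments.
Unset Strict Implicit.
Unset Printing Implicit Defensive.

Import GRing.Theory.
Local Open Scope ring_scope.

(* delta_0 : n x n matrix, n = H + L + L, blocks of sizes H, L, L;
   identity I_L in block position (2,3), zeros elsewhere. *)
Definition delta0 (D H L : nat) : 'M['F_D]_(H + L + L) :=
  \matrix_(i, j) (if [&& (H <= i)%N, (i < H + L)%N & (nat_of_ord j == (i + L)%N)]
                  then 1 else 0).

(* The boundary operator
   delta = diag(U+,U-) [[0,delta0],[delta0,0]] diag(U+^-1,U-^-1)
         = [[0, U+ delta0 U-^-1], [U- delta0 U+^-1, 0]]. *)
Definition boundary (D H L : nat) (Up Um : 'M['F_D]_(H + L + L))
  : 'M['F_D]_(H + L + L + (H + L + L)) :=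
  block_mx 0 (Up *m delta0 D H L *m invmx Um)
           (Um *m delta0 D H L *m invmx Up) 0.

Definition weight (D m : nat) (v : 'cV['F_D]_m) : nat :=
  #|[set i : 'I_m | v i 0 != 0]|.

Definition Rltb (x y : R) : bool := if Rlt_dec x y then true else false.

Definition has_low_weight_kernel_vector (D H L : nat) (c : R)
  (Up Um : 'M['F_D]_(H + L + L)) : bool :=
  [exists v : 'cV['F_D]_(H + L + L + (H + L + L)),
     [&& v != 0, boundary Up Um *m v == 0 &
         Rltb (INR (weight v)) (Rmult c (INR (H + L + L)))]].

Definition bad_count (D H L : nat) (c : R) : nat :=
  #|[set p : 'M['F_D]_(H + L + L) * 'M['F_D]_(H + L + L) |
      [&& p.1 \in unitmx, p.2 \in unitmx &
          has_low_weight_kernel_vector c p.1 p.2]]|.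

Definition GL_count (D n : nat) : nat :=
  #|[set U : 'M['F_D]_n | U \in unitmx]|.

(* Probability under (U+, U-) independent uniform on GL(n, F_D). *)
Definition bad_prob (D H L : nat) (c : R) : R :=
  Rdiv (INR (bad_count D H L c)) (INR (GL_count D (H + L + L) ^ 2)).

From Stdlib Require Import Reals Lra.
From mathcomp Require Import all_boot all_algebra.
Set Implicit Arguments. Unset Strict Implicit. Unset Printing Implicit Defensive.
Import GRing.Theory.
Local Open Scope ring_scope.

(* A vector (x, y) lies in ker delta iff delta0 (U+^-1 x) = 0 and
   delta0 (U-^-1 y) = 0, so a union bound over the nonzero vectors z of
   weight < c n reduces the problem to P[delta0 (U^-1 z) = 0] for a fixed z.
   As GL_n acts transitively on nonzero vectors, U^-1 z is uniform among
   them, and this probability is at most |ker delta0| / D^n <= D^-L.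
   Comparing the count of light vectors with the weight enumerator,
   #{wt z <= w} T^(n-w) <= (T + D)^n for T = D^(q+1), there are at most
   D^(2n/q) of them when c = 1/((q+1)q).  Since L >= (1 - 1/q) n/2 the
   probability is at most 2 D^(2n/q - L) <= 2 D^((-1/2 + eps) n) once
   q eps > 3. *)

Section TransitiveGL.

Variables (F : fieldType) (n : nat).

Lemma nonzero_col_ebase (x : 'cV[F]_n) : x != 0 ->
  exists C : 'M[F]_n, exists a : F,
    [/\ C \in unitmx, a != 0 & x = a *: (C *m pid_mx 1)].
Proof.
move=> x_nz; have rk_x : \rank x = 1%N.
  by apply/eqP; rewrite eqn_leq rank_leq_col lt0n mxrank_eq0.
have xE := mulmx_ebase x; rewrite rk_x in xE.
exists (col_ebase x), (row_ebase x 0 0); split.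
- exact: col_ebase_unit.
- by have := row_ebase_unit x; rewrite unitmxE det_mx11 unitfE.
- by rewrite -[LHS]xE {1}[row_ebase x]mx11_scalar mul_mx_scalar.
Qed.

Lemma unitmx_transitive (x y : 'cV[F]_n) : x != 0 -> y != 0 ->
  exists2 P : 'M[F]_n, P \in unitmx & P *m x = y.
Proof.
move=> /nonzero_col_ebase [C [a [uC a_nz ->]]].
move=> /nonzero_col_ebase [C' [b [uC' b_nz ->]]].
exists ((b / a) *: (C' *m invmx C)).
  by rewrite unitmxZ ?unitfE ?mulf_neq0 ?invr_eq0 // unitmx_mul uC' unitmx_inv.
rewrite -scalemxAr -scalemxAl scalerA mulmxA -(mulmxA C') mulVmx //.
by rewrite mulmx1 mulrC divfK.
Qed.

End TransitiveGL.

Section KernelUnits.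

Variables (F : finFieldType) (k n : nat) (M : 'M[F]_(k, n)).

Definition kerset := [set w : 'cV[F]_n | M *m w == 0].

Definition ker_units (x : 'cV[F]_n) :=
  [set U : 'M[F]_n | (U \in unitmx) && (M *m (invmx U *m x) == 0)].

Lemma card_ker_units_mono (x y : 'cV[F]_n) : x != 0 -> y != 0 ->
  (#|ker_units x| <= #|ker_units y|)%N.
Proof.
move=> x_nz y_nz; have [P uP Pxy] := unitmx_transitive x_nz y_nz.
rewrite -(card_imset _ (can_inj (mulKmx uP))).
apply/subset_leq_card/subsetP => V /imsetP [U]; rewrite inE => /andP [uU kerU] ->.
have uPU : P *m U \in unitmx by rewrite unitmx_mul uP.
have -> : y = (P *m U) *m (invmx U *m x) by rewrite -Pxy -mulmxA mulKVmx.
by rewrite inE uPU mulKmx.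
Qed.

Lemma card_nonzero_invmx_ker (U : 'M[F]_n) : U \in unitmx ->
  #|[set x : 'cV[F]_n | (x != 0) && (M *m (invmx U *m x) == 0)]| = #|kerset|.-1.
Proof.
move=> uU.
have -> : [set x : 'cV[F]_n | (x != 0) && (M *m (invmx U *m x) == 0)] =
          mulmx U @: (kerset :\ 0).
  apply/setP => x; rewrite !inE; apply/andP/imsetP => [[x_nz kx] | [w]].
    exists (invmx U *m x); last by rewrite mulKVmx.
    rewrite !inE kx andbT; apply: contra x_nz => /eqP Ux0.
    by rewrite -(mulKVmx uU x) Ux0 mulmx0.
  rewrite !inE => /andP [w_nz kw] ->; rewrite mulKmx // kw; split => //.
  by apply: contra w_nz => /eqP Uw0; rewrite -(mulKmx uU w) Uw0 mulmx0.
rewrite card_imset; last exact: can_inj (mulKmx uU).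
by rewrite (cardsD1 0 kerset) inE mulmx0 eqxx.
Qed.

Lemma sum_card_ker_units :
  (\sum_(y : 'cV[F]_n | (y != 0)%R) #|ker_units y| =
     #|[set U : 'M[F]_n | U \in unitmx]| * #|kerset|.-1)%N.
Proof.
under eq_bigr do rewrite -sum1_card.
rewrite (exchange_big_dep (fun U => U \in unitmx)) /=; last first.
  by move=> y U _; rewrite inE => /andP [].
rewrite -sum_nat_cond_const; apply: eq_bigr => U uU.
rewrite sum1dep_card -(card_nonzero_invmx_ker uU).
by apply: eq_card => y; rewrite !inE uU.
Qed.

Lemma card_ker_units_le (x : 'cV[F]_n) : x != 0 ->
  (#|ker_units x| * #|F| ^ n <= #|[set U : 'M[F]_n | U \in unitmx]| * #|kerset|)%N.
Proof.
move=> x_nz; set G := #|[set U : 'M[F]_n | U \in unitmx]|.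
(* By transitivity all nonzero vectors have the same count, so double
   counting gives #|ker_units x| * (#|F| ^ n - 1) = G * (#|kerset| - 1). *)
have card_ker_unitsE y : y != 0 -> #|ker_units y| = #|ker_units x|.
  by move=> y_nz; apply/eqP; rewrite eqn_leq !card_ker_units_mono.
have := sum_card_ker_units; rewrite (eq_bigr _ card_ker_unitsE) sum_nat_cond_const.
have -> : #|[set y : 'cV[F]_n | y != 0]| = (#|F| ^ n).-1.
  have -> : [set y : 'cV[F]_n | y != 0] = [set~ 0] by apply/setP => y; rewrite !inE.
  by rewrite cardsC1 card_mx muln1.
have ker_gt0 : (0 < #|kerset|)%N by apply/card_gt0P; exists 0; rewrite inE mulmx0.
have vec_gt0 : (0 < #|F| ^ n)%N.
  by rewrite expn_gt0; apply/orP; left; apply/card_gt0P; exists 0.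
have units_le : (#|ker_units x| <= G)%N.
  by apply/subset_leq_card/subsetP => U; rewrite !inE => /andP [].
rewrite -{2}(prednK vec_gt0) -{2}(prednK ker_gt0) !mulnS mulnC => ->.
by rewrite leq_add2r.
Qed.

End KernelUnits.

Section Delta0.

Variables (D H L : nat).

Lemma delta0_ker_dsubmx (w : 'cV['F_D]_(H + L + L)) :
  delta0 D H L *m w = 0 -> dsubmx w = 0.
Proof.
move=> /matrixP ker_w; apply/matrixP => j z; rewrite ord1 [RHS]mxE.
have Hj : (H + j < H + L + L)%N by rewrite -addnA ltn_add2l ltn_addr.
move: (ker_w (Ordinal Hj) 0); rewrite !mxE => <-.
rewrite (bigD1 (rshift (H + L) j)) //= big1 ?addr0.
  by rewrite mxE leq_addr ltn_add2l ltn_ord addnAC eqxx mul1r.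
move=> i i_neq; rewrite mxE; case: ifP => [/and3P [_ _ /eqP iE] | _]; last first.
  by rewrite mul0r.
by case/eqP: i_neq; apply: val_inj; rewrite /= iE addnAC.
Qed.

Lemma card_kerset_delta0 : prime D -> (#|kerset (delta0 D H L)| <= D ^ (H + L))%N.
Proof.
move=> D_pr; rewrite -(card_in_imset (f := @usubmx _ (H + L) L 1)).
  by apply: leq_trans (max_card _) _; rewrite card_mx card_Fp // muln1.
move=> w1 w2; rewrite !inE => /eqP/delta0_ker_dsubmx w1E /eqP/delta0_ker_dsubmx w2E /= uE.
by rewrite -(vsubmxK w1) -(vsubmxK w2) w1E w2E uE.
Qed.

End Delta0.

Lemma RltbP (x y : R) : reflect (Rlt x y) (Rltb x y).
Proof. by rewrite /Rltb; case: Rlt_dec => h; constructor. Qed.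

Section Weight.

Variable D : nat.
Hypothesis D_pr : prime D.

Lemma weight_usubmx m1 m2 (v : 'cV['F_D]_(m1 + m2)) :
  (weight (usubmx v) <= weight v)%N.
Proof.
rewrite /weight -(card_imset _ (@lshift_inj m1 m2)).
by apply/subset_leq_card/subsetP => j /imsetP [i]; rewrite !inE mxE => ? ->.
Qed.

Lemma weight_dsubmx m1 m2 (v : 'cV['F_D]_(m1 + m2)) :
  (weight (dsubmx v) <= weight v)%N.
Proof.
rewrite /weight -(card_imset _ (@rshift_inj m1 m2)).
by apply/subset_leq_card/subsetP => j /imsetP [i]; rewrite !inE mxE => ? ->.
Qed.

Lemma weight_enumerator_le m T :
  (\sum_(x : 'cV['F_D]_m) T ^ (m - weight x) <= (T + D) ^ m)%N.
Proof.
pose f (a : 'F_D) := if a == 0 then T else 1%N.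
(* T ^ (number of zeros of x) factors over the coordinates of x. *)
have zerosE (x : 'cV['F_D]_m) : (T ^ (m - weight x) = \prod_i f (x i ord0))%N.
  have -> : (m - weight x = #|[set i | x i ord0 == 0%R]|)%N.
    rewrite /weight -{1}(card_ord m) -(cardsC [set i | x i 0 != 0]) addKn.
    by apply: eq_card => i; rewrite !inE negbK.
  rewrite -prod_nat_const big_mkcond /=; apply: eq_bigr => i _.
  by rewrite !inE /f; case: (x i 0 == 0).
rewrite (eq_bigr _ (fun x _ => zerosE x)).
pose col_of (g : {ffun 'I_m -> 'F_D}) : 'cV['F_D]_m := \col_i g i.
pose fun_of (x : 'cV['F_D]_m) : {ffun 'I_m -> 'F_D} := [ffun i => x i ord0].
rewrite (reindex col_of) /=; last first.
  apply: onW_bij; exists fun_of => [g | x].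
    by apply/ffunP => i; rewrite ffunE mxE.
  by apply/matrixP => i j; rewrite ord1 !mxE ffunE.
under eq_bigr do under eq_bigr do rewrite mxE.
rewrite (_ : (\sum_(g : {ffun 'I_m -> 'F_D}) \prod_i f (g i) =
              \prod_(i < m) \sum_(a : 'F_D) f a)%N); last by rewrite bigA_distr_bigA.
have -> : ((T + D) ^ m = \prod_(i < m) (T + D))%N by rewrite prod_nat_const card_ord.
apply: leq_prod => i _.
rewrite (bigD1 0) //= {1}/f eqxx leq_add2l.
rewrite (eq_bigr (fun _ => 1%N)) => [|a /negPf]; last by rewrite /f => ->.
by rewrite sum1_card; apply: leq_trans (max_card _) _; rewrite card_Fp.
Qed.

Lemma card_weight_le m T w (S : {set 'cV['F_D]_m}) : (0 < T)%N ->
  {in S, forall x, weight x <= w}%N -> (#|S| * T ^ (m - w) <= (T + D) ^ m)%N.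
Proof.
move=> T_gt0 S_w; apply: leq_trans (weight_enumerator_le m T).
rewrite -sum_nat_const [X in (_ <= X)%N](bigID (mem S)) /= -[X in (X <= _)%N]addn0.
apply: leq_add; last exact: leq0n.
by apply: leq_sum => x xS; rewrite leq_pexp2l // leq_sub2l // S_w.
Qed.

Definition low_weight_vectors m (t : R) :=
  [set x : 'cV['F_D]_m | (x != 0) && Rltb (INR (weight x)) t].

Lemma exists_card_low_weight_le m T (t : R) : (0 < T)%N -> Rlt 0 t ->
  exists2 w : nat, Rlt (INR w) t &
    (#|low_weight_vectors m t| * T ^ (m - w) <= (T + D) ^ m)%N.
Proof.
move=> T_gt0 t_gt0; exists (\max_(x in low_weight_vectors m t) weight x).
  apply: (big_ind (fun w => Rlt (INR w) t)) => // [w1 w2 lt1 lt2 | x].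
    by case: (leqP w1 w2).
  by rewrite inE => /andP [_ /RltbP].
by apply: card_weight_le => // x xS; apply: leq_bigmax_cond.
Qed.

End Weight.

Lemma leq_card_bigcup (I T : finType) (P : pred I) (E : I -> {set T}) :
  (#|\bigcup_(i | P i) E i| <= \sum_(i | P i) #|E i|)%N.
Proof.
apply: (big_ind2 (fun (X : {set T}) m => #|X| <= m)%N) => //; first by rewrite cards0.
by move=> X1 m1 X2 m2 le1 le2; apply: leq_trans (leq_card_setU X1 X2) (leq_add _ _).
Qed.

Lemma mulmx_unit_eq0 (R : comUnitRingType) n p (U : 'M[R]_n) (A : 'M[R]_(n, p)) :
  U \in unitmx -> (U *m A == 0) = (A == 0).
Proof.
move=> uU; apply/eqP/eqP => [UA0 | ->]; last exact: mulmx0.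
by rewrite -(mulKmx uU A) UA0 mulmx0.
Qed.

Section UnionBound.

Variables (D H L : nat) (c : R).
Hypothesis D_pr : prime D.

Local Notation n := (H + L + L)%N.
Local Notation LW := (low_weight_vectors D n (Rmult c (INR n))).
Local Notation GL := [set U : 'M['F_D]_n | U \in unitmx].

Lemma boundary_mul_col_eq0 (Up Um : 'M['F_D]_n) (x y : 'cV['F_D]_n) :
  Up \in unitmx -> Um \in unitmx ->
  (boundary Up Um *m col_mx x y == 0) =
    (delta0 D H L *m (invmx Up *m x) == 0) && (delta0 D H L *m (invmx Um *m y) == 0).
Proof.
move=> uUp uUm; rewrite /boundary mul_block_col !mul0mx add0r addr0 col_mx_eq0.
by rewrite -!mulmxA (mulmx_unit_eq0 _ uUp) (mulmx_unit_eq0 _ uUm) andbC.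
Qed.

Lemma bad_pairs_sub :
  [set p : 'M['F_D]_n * 'M['F_D]_n |
     [&& p.1 \in unitmx, p.2 \in unitmx & has_low_weight_kernel_vector c p.1 p.2]]
  \subset \bigcup_(x in LW)
     (setX (ker_units (delta0 D H L) x) GL :|: setX GL (ker_units (delta0 D H L) x)).
Proof.
apply/subsetP => -[Up Um]; rewrite inE /= => /and3P [uUp uUm].
case/existsP => v /and3P [v_nz]; rewrite -[v in _ *m v]vsubmxK boundary_mul_col_eq0 //.
case/andP => ker_u ker_d /RltbP low_v.
have low_u := Rle_lt_trans _ _ _ (le_INR _ _ (leP (weight_usubmx v))) low_v.
have low_d := Rle_lt_trans _ _ _ (le_INR _ _ (leP (weight_dsubmx v))) low_v.
have [u0 | u_nz] := eqVneq (usubmx v) 0.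
  have d_nz : dsubmx v != 0.
    by apply: contra v_nz => /eqP d0; rewrite -[v]vsubmxK u0 d0 col_mx0.
  apply/bigcupP; exists (dsubmx v); first by rewrite inE d_nz; apply/RltbP.
  by apply/setUP; right; rewrite in_setX !in_set uUp uUm; exact: ker_d.
apply/bigcupP; exists (usubmx v); first by rewrite inE u_nz; apply/RltbP.
by apply/setUP; left; rewrite in_setX !in_set uUp uUm andbT; exact: ker_u.
Qed.

Lemma bad_count_le :
  (bad_count D H L c * D ^ n <= #|LW| * (2 * GL_count D n ^ 2 * D ^ (H + L)))%N.
Proof.
rewrite /bad_count; set G := GL_count D n; have GE : #|GL| = G by [].
apply: leq_trans (leq_mul (subset_leq_card bad_pairs_sub) (leqnn _)) _.
apply: leq_trans (leq_mul (leq_card_bigcup _ _) (leqnn _)) _.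
rewrite big_distrl /= -sum_nat_const; apply: leq_sum => x; rewrite inE => /andP [x_nz _].
apply: leq_trans (leq_mul (leq_card_setU _ _) (leqnn _)) _.
have := card_ker_units_le (delta0 D H L) x_nz; rewrite card_Fp // GE => units_le.
rewrite !cardsX GE [(_ * G)%N]mulnC addnn -mul2n expnS expn1 -!mulnA !leq_mul2l.
apply/orP; right; apply/orP; right; apply: leq_trans units_le _.
by rewrite leq_mul2l card_kerset_delta0 ?orbT.
Qed.

End UnionBound.

Local Open Scope R_scope.

Lemma INR_expn a b : INR (a ^ b)%N = INR a ^ b.
Proof. by elim: b => [|b IH] //; rewrite expnS mult_INR IH. Qed.

Section RpowerBounds.

Variable d : R.
Hypothesis d_ge3 : 3 <= d.

Let d_gt0 : 0 < d. Proof. lra. Qed.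

Lemma one_add_le_Rpower x : 0 <= x -> 1 + x <= Rpower d x.
Proof.
move=> x_ge0; apply: Rle_trans (exp_ineq1_le x) _.
have -> : exp x = Rpower (exp 1) x by rewrite /Rpower ln_exp Rmult_1_r.
apply: Rle_Rpower_l => //; split; [exact: exp_pos | have := exp_le_3; lra].
Qed.

Lemma Rpower_pow_mul y (N : nat) : Rpower d y ^ N = Rpower d (y * INR N).
Proof. by rewrite -Rpower_pow ?Rpower_mult //; exact: exp_pos. Qed.

Lemma Rpower_add_base_le q : 0 < q -> Rpower d (q + 1) + d <= Rpower d (q + 1 + / q).
Proof.
move=> q_gt0.
have q_le : q <= Rpower d q by have := one_add_le_Rpower (Rlt_le _ _ q_gt0); lra.
have inv_le := one_add_le_Rpower (Rlt_le _ _ (Rinv_0_lt_compat _ q_gt0)).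
have dq_ge : d <= Rpower d (q + 1) * / q.
  rewrite Rpower_plus Rpower_1 //.
  apply: (Rmult_le_reg_r q) => //; rewrite Rmult_assoc Rinv_l; last lra.
  by rewrite Rmult_1_r Rmult_comm; apply: Rmult_le_compat_r; lra.
rewrite [X in _ <= X]Rpower_plus.
have P_gt0 : 0 < Rpower d (q + 1) by exact: exp_pos.
nra.
Qed.

Lemma count_le_Rpower q w W (N : nat) : 0 < q -> (q + 1) * w <= INR N / q ->
  W * Rpower d ((q + 1) * (INR N - w)) <= (Rpower d (q + 1) + d) ^ N ->
  W <= Rpower d (2 * INR N / q).
Proof.
move=> q_gt0 w_le W_le.
have base_le : (Rpower d (q + 1) + d) ^ N <=
    Rpower d ((q + 1) * (INR N - w)) * Rpower d ((q + 1) * w + INR N / q).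
  apply: Rle_trans (pow_incr _ _ N _) _.
    split; last exact: Rpower_add_base_le.
    by apply: Rplus_le_le_0_compat; [exact: Rlt_le (exp_pos _) | lra].
  by rewrite Rpower_pow_mul -Rpower_plus; right; f_equal; field; lra.
have E_gt0 : 0 < Rpower d ((q + 1) * (INR N - w)) by exact: exp_pos.
apply: Rle_trans (_ : W <= Rpower d ((q + 1) * w + INR N / q)) _.
  by apply: (Rmult_le_reg_l _ _ _ E_gt0); nra.
by apply: Rle_Rpower; lra.
Qed.

End RpowerBounds.

Lemma exponent_le q eps n h l : 0 < q -> 3 < q * eps -> 0 <= h -> 0 <= l ->
  n = h + 2 * l -> h <= / q * n -> 2 * n / q - l <= (- (1/2) + eps) * n.
Proof.
move=> q_gt0 q_eps h_ge0 l_ge0 nE h_le.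
have u_ge0 : 0 <= n / q by apply: Rmult_le_pos; [lra | apply/Rlt_le/Rinv_0_lt_compat].
have nqE : n = q * (n / q) by field; lra.
have := Rmult_le_pos _ _ (ltac:(lra) : 0 <= q * eps - 3) u_ge0.
rewrite Rmult_comm -/(Rdiv n q) in h_le.
move: nqE h_le; rewrite /Rdiv -Rmult_assoc -/(Rdiv _ _); set u := n / q; nra.
Qed.

Lemma bad_prob_le D H L c : prime D ->
  bad_prob D H L c <=
    2 * INR #|low_weight_vectors D (H + L + L) (c * INR (H + L + L))|
      * Rpower (INR D) (- INR L).
Proof.
move=> D_pr; set W := INR #|_|.
have d_gt0 : 0 < INR D by apply: lt_0_INR; apply/ltP; exact: prime_gt0.
have G_gt0 : 0 < INR (GL_count D (H + L + L)) ^ 2.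
  apply: pow_lt; apply: lt_0_INR; apply/ltP; rewrite card_gt0.
  by apply/set0Pn; exists 1%:M; rewrite inE unitmx1.
have dL_gt0 : 0 < INR D ^ L by exact: pow_lt.
have dHL_gt0 : 0 < INR D ^ (H + L) by exact: pow_lt.
have := le_INR _ _ (leP (bad_count_le H L c D_pr)).
have dE : INR D ^ (H + L + L) = INR D ^ (H + L) * INR D ^ L by exact: pow_add.
rewrite !mult_INR !INR_expn dE (_ : INR 2 = 2) // => count_le.
have : INR (bad_count D H L c) * INR D ^ L <= 2 * W * INR (GL_count D (H + L + L)) ^ 2.
  by apply: (Rmult_le_reg_r _ _ _ dHL_gt0); rewrite /W; nra.
rewrite /bad_prob INR_expn Rpower_Ropp Rpower_pow // => {}count_le.
apply: (Rmult_le_reg_r (INR (GL_count D (H + L + L)) ^ 2 * INR D ^ L)); first nra.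
by field_simplify; nra.
Qed.

Lemma card_low_weight_vectors_le D q m : prime D -> (2 < D)%N -> (0 < q)%N ->
  (0 < m)%N ->
  INR #|low_weight_vectors D m (/ ((INR q + 1) * INR q) * INR m)|
    <= Rpower (INR D) (2 * INR m / INR q).
Proof.
move=> D_pr D_gt2 q_gt0 m_gt0.
have d_ge3 : 3 <= INR D by have /= := le_INR 3 D (leP D_gt2); lra.
have qR_ge1 : 1 <= INR q by have /= := le_INR 1 q (leP q_gt0); lra.
have mR_gt0 : 0 < INR m by apply: lt_0_INR; apply/ltP.
set c := / ((INR q + 1) * INR q).
have c_gt0 : 0 < c by apply: Rinv_0_lt_compat; nra.
have c_le1 : c <= 1 by rewrite -Rinv_1; apply: Rinv_le_contravar; nra.
have T_gt0 : (0 < D ^ q.+1)%N by rewrite expn_gt0 (ltn_trans _ D_gt2).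
have [w w_lt card_le] :=
  exists_card_low_weight_le D_pr m T_gt0 (Rmult_lt_0_compat _ _ c_gt0 mR_gt0).
have w_le : (w <= m)%N by apply/leP/INR_le; nra.
have RpowE k : INR (D ^ k) = Rpower (INR D) (INR k) by rewrite INR_expn Rpower_pow //; lra.
have powE : INR ((D ^ q.+1) ^ (m - w)) = Rpower (INR D) ((INR q + 1) * (INR m - INR w)).
  by rewrite -expnM RpowE mult_INR S_INR minus_INR //; apply/leP.
have baseE : INR (D ^ q.+1 + D) = Rpower (INR D) (INR q + 1) + INR D.
  by rewrite plus_INR RpowE S_INR.
apply: (count_le_Rpower d_ge3 (w := INR w)); first lra.
  have := Rmult_lt_compat_l (INR q + 1) _ _ ltac:(lra) w_lt.
  rewrite /c (_ : (INR q + 1) * (/ ((INR q + 1) * INR q) * INR m) = INR m / INR q).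
    lra.
  by field; lra.
by have := le_INR _ _ (leP card_le); rewrite mult_INR powE INR_expn baseE.
Qed.

Theorem lemma1 :
  forall (D : nat), prime D -> odd D ->
  forall eps : R, 0 < eps ->
  exists c rho : R, 0 < c /\ 0 < rho /\
  exists (K : R) (N : nat), 0 < K /\
  forall H L : nat,
    (N <= H + 2 * L)%N ->
    INR H <= rho * INR (H + 2 * L)%N ->
    bad_prob D H L c <=
       K * Rpower (INR D) ((- (1/2) + eps) * INR (H + 2 * L)%N).
Proof.
move=> D D_pr D_odd eps eps_gt0.
have D_gt2 : (2 < D)%N.
  by move: (prime_gt1 D_pr) D_odd; case: (D) => [|[|[|]]].
have [q q_eps] := INR_archimed eps 3 eps_gt0.
have q_gt0 : (0 < q)%N by case: q q_eps => [|q] //=; lra.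
have qR_gt0 : 0 < INR q by apply: lt_0_INR; apply/ltP.
exists (/ ((INR q + 1) * INR q)), (/ INR q); split; first by apply: Rinv_0_lt_compat; nra.
split; first exact: Rinv_0_lt_compat.
exists 2, 1%N; split=> [|H L n_gt0 H_le]; first lra.
have nE : (H + 2 * L = H + L + L)%N by rewrite mul2n -addnn addnA.
rewrite nE in n_gt0 H_le *.
apply: Rle_trans (bad_prob_le H L _ D_pr) _.
have W_le := card_low_weight_vectors_le D_pr D_gt2 q_gt0 n_gt0.
have exp_le : 2 * INR (H + L + L) / INR q - INR L <= (- (1/2) + eps) * INR (H + L + L).
  apply: (exponent_le (h := INR H)) => //; try exact: pos_INR.
  by rewrite !plus_INR; ring.
rewrite Rmult_assoc; apply: Rmult_le_compat_l; first lra.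
apply: Rle_trans (Rmult_le_compat_r _ _ _ (Rlt_le _ _ (exp_pos _)) W_le) _.
by rewrite -Rpower_plus; apply: Rle_Rpower => //; have /= := le_INR 3 D (leP D_gt2); lra.
Qed.
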